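(* Let $G$ be a simple graph with at least one edge, with Laplacian eigenvalues $\mu_1\ge\mu_2\ge\cdots\ge\mu_n$, and (having fixed orientations of the edges and triangles of $G$) let $\eta_1\ge\eta_2\ge\cdots\ge\eta_t$ be the eigenvalues of the adjacency matrix $A(G_{\vartriangle})$ of the triangular signed graph $G_{\vartriangle}$. Then the non-zero eigenvalues of $\mathcal{H}(G)$ (with multiplicities) are exactly all $\mu_i$ with $\mu_i\ne 0$ together with all $3+\eta_j$ with $\eta_j\ne -3$. In particular, the largest eigenvalue of $\mathcal{H}(G)$ is $\max\{\mu_1,3+\eta_1\}$ (the term $3+\eta_1$ being absent when $G$ has no triangles).
   Context: $L(G)=D(G)-A(G)$ is the Laplacian matrix. For an oriented edge $e$ write $e^-$ for its tail and $e^+$ for its head. For distinct edges $e,e'$: $e\leftrightarrow e'$ means $e^+=e'^-$ or $e'^+=e^-$; $e\overset{\pm}{\sim}e'$ means $e^+=e'^+$ or $e^-=e'^-$; $e\vartriangle e'$ means $e,e'$ are two edges of a common triangle. $\triangle(e)$ is the number of triangles containing $e$. The Helmholtzian matrix $\mathcal{H}(G)=(h_{ee'})$ is indexed by edges, with $h_{ee}=\triangle(e)+2$, and for $e\ne e'$: $h_{ee'}=-1$ if $e\leftrightarrow e'$ and not $e\vartriangle e'$; $h_{ee'}=1$ if $e\overset{\pm}{\sim}e'$ and not $e\vartriangle e'$; $h_{ee'}=0$ otherwise. Each triangle $\vartriangle$ is given a cyclic orientation; for an edge $e$ of $\vartriangle$ write $e\in\vartriangle^+$ if the orientation of $e$ agrees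 with that of $\vartriangle$ and $e\in\vartriangle^-$ otherwise. The triangular signed graph $G_{\vartriangle}$ has the $t$ triangles of $G$ as vertices; two distinct triangles $\vartriangle_1,\vartriangle_2$ sharing an edge $e$ are joined by a positive edge if $e\in\vartriangle_1^+\cap\vartriangle_2^+$ or $e\in\vartriangle_1^-\cap\vartriangle_2^-$, and by a negative edge otherwise; triangles sharing no edge are non-adjacent. $A(G_{\vartriangle})$ has entry $\pm1$ for positive/negative edges and $0$ elsewhere. *)

From HB Require Import structures.
From mathcomp Require Import all_boot all_order all_algebra.
Set Implicit Arguments. Unset Strict Implicit. Unset Printing Implicit Defensive.
Import Order.TTheory GRing.Theory Num.Theory.
Local Open Scope ring_scope.

(* Triangles are indexed by 'I_t;
   [tri i = (a,b,c)] is triangle {a,b,c} with cyclic orientation a->b->c->a. *)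

Section Graph.
Variables (n m t : nat) (tl hd : 'I_m -> 'I_n).
Variable tri : 'I_t -> 'I_n * 'I_n * 'I_n.

Definition adjv (u v : 'I_n) : bool :=
  [exists e, ((tl e == u) && (hd e == v)) || ((tl e == v) && (hd e == u))].

Definition simple_oriented : Prop :=
  (forall e, tl e != hd e) /\
  (forall e e', [set tl e; hd e] = [set tl e'; hd e'] -> e = e').

Definition tri_vs (i : 'I_t) : {set 'I_n} :=
  let: (a, b, c) := tri i in [set a; b; c].

Definition oriented_triangles : Prop :=
  (forall i, let: (a, b, c) := tri i in
     [&& a != b, b != c, a != c, adjv a b, adjv b c & adjv a c]) /\
  (forall i j, tri_vs i = tri_vs j -> i = j) /\
  (forall a b c, adjv a b -> adjv b c -> adjv a c ->
     exists i, tri_vs i = [set a; b; c]).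

Definition in_tri (i : 'I_t) (e : 'I_m) : bool :=
  (tl e \in tri_vs i) && (hd e \in tri_vs i).

Definition tri_pos (i : 'I_t) (e : 'I_m) : bool :=
  let: (a, b, c) := tri i in
  [|| (tl e, hd e) == (a, b), (tl e, hd e) == (b, c) | (tl e, hd e) == (c, a)].

Definition tri_neg (i : 'I_t) (e : 'I_m) : bool := in_tri i e && ~~ tri_pos i e.

Variable R : numDomainType.

Definition adj_mx : 'M[R]_n := \matrix_(u, v) (if adjv u v then 1 else 0).
Definition deg_mx : 'M[R]_n :=
  \matrix_(u, v) (if u == v then (#|[set w | adjv u w]|)%:R else 0).
Definition laplacian : 'M[R]_n := deg_mx - adj_mx.

Definition ntri (e : 'I_m) : nat := #|[set i | in_tri i e]|.

Definition head_tail (e e' : 'I_m) : bool := (hd e == tl e') || (hd e' == tl e).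
Definition same_end (e e' : 'I_m) : bool := (hd e == hd e') || (tl e == tl e').
Definition co_tri (e e' : 'I_m) : bool := [exists i, in_tri i e && in_tri i e'].

Definition helmholtzian : 'M[R]_m :=
  \matrix_(e, e')
    (if e == e' then (ntri e + 2)%:R
     else if head_tail e e' && ~~ co_tri e e' then -1
     else if same_end e e' && ~~ co_tri e e' then 1
     else 0).

Definition tri_adj_mx : 'M[R]_t :=
  \matrix_(i, j)
    (if (i != j) && [exists e, in_tri i e && in_tri j e] then
       (if [exists e, in_tri i e && in_tri j e &&
                      ((tri_pos i e && tri_pos j e) || (tri_neg i e && tri_neg j e))]
        then 1 else -1)
     else 0).

End Graph.

Definition is_max_eig (R : numFieldType) (k : nat) (M : 'M[R]_k) (x : R) : Prop :=
  eigenvalue M x /\ (forall y, eigenvalue M y -> y <= x).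

From HB Require Import structures.
From mathcomp Require Import all_boot all_order all_algebra.
From mathcomp Require Import ring complex.
Set Implicit Arguments. Unset Strict Implicit. Unset Printing Implicit Defensive.
Import Order.TTheory GRing.Theory Num.Theory.
Local Open Scope ring_scope.

(* Let B1 be the signed vertex-edge incidence matrix and B2 the signed
   edge-triangle incidence matrix of G.  Then L(G) = B1 B1^T,
   H(G) = B1^T B1 + B2 B2^T and B2^T B2 = 3 I + A(G_Δ), while B1 B2 = 0
   because the boundary of a triangle is a cycle.  Hence the two summands
   of H(G) annihilate each other, so the non-zero spectrum of H(G) is the
   union of those of B1^T B1 and B2 B2^T, which by Sylvester's identity are
   those of L(G) and of 3 I + A(G_Δ).  For the largest eigenvalue one also
   needs mu_1 > 0: L(G) is symmetric, so its eigenvalues are real, and they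
   sum to tr L(G) = 2m > 0. *)

(* With [vc] the conjugate transpose of an eigenvector [v], the scalar
   [v A vc] is its own conjugate and equals [z] times [v vc] > 0. *)
Lemma hermitian_eigenvalue_real (C : numClosedFieldType) k (A : 'M[C]_k) (z : C) :
  (map_mx Num.conj A)^T = A -> eigenvalue A z -> z \is Num.real.
Proof.
move=> herm /eigenvalueP [v vA v0].
set vc := (map_mx Num.conj v)^T.
have q_gt0 : 0 < (v *m vc) 0 0.
  rewrite mxE; have [i vi0] : exists i, v 0 i != 0.
    apply/existsP; apply: contraNT v0 => /existsPn v0.
    by apply/eqP/rowP => i; rewrite mxE; apply/eqP; rewrite -[_ == _]negbK v0.
  rewrite (bigD1 i) //= ltr_wpDr ?sumr_ge0 // => [j _|]; rewrite !mxE.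
    exact: mul_conjC_ge0.
  by rewrite mul_conjC_gt0.
set x := v *m A *m vc.
have xE : x 0 0 = z * (v *m vc) 0 0 by rewrite /x vA -scalemxAl mxE.
have xJ : map_mx Num.conj x = x^T.
  have hermT : map_mx Num.conj A = A^T by rewrite -[in RHS]herm trmxK.
  have vcJ : map_mx Num.conj vc = v^T.
    by apply/matrixP => i j; rewrite !mxE conjCK.
  by rewrite /x !map_mxM hermT vcJ !trmx_mul trmxK mulmxA.
have /(congr1 (fun M : 'M_1 => M 0 0)) := xJ.
rewrite mxE [x^T _ _]mxE xE rmorphM /= (CrealP (gtr0_real q_gt0)).
by move/(mulIf (lt0r_neq0 q_gt0)) => zJ; apply/CrealP.
Qed.

Lemma symmetric_eigenvalue_gt0 (R : rcfType) k (S : 'M[R]_k) :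
  S^T = S -> 0 < \tr S -> exists2 r, 0 < r & eigenvalue S r.
Proof.
move=> Ssym trS.
have k_gt0 : (0 < k)%N by case: k S trS {Ssym} => // S; rewrite /mxtrace big_ord0 ltxx.
set SC := map_mx (real_complex R) S.
have SC_herm : (map_mx Num.conj SC)^T = SC.
  by apply/matrixP => i j; rewrite !mxE -[in RHS]Ssym mxE; exact: conjc_real.
(* The roots of the characteristic polynomial over [R[i]] are real and sum to the trace. *)
have [rs charE] := closed_field_poly_normal (char_poly SC).
rewrite (monicP (char_poly_monic SC)) scale1r in charE.
have size_rs : size rs = k.
  by have := size_char_poly SC; rewrite charE size_prod_XsubC => -[].
have eig_rs z : z \in rs -> eigenvalue SC z.
  by move=> zrs; rewrite eigenvalue_root_char charE root_prod_XsubC.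
have sum_rs : \sum_(z <- rs) z = real_complex R (\tr S).
  have := char_poly_trace SC k_gt0; rewrite charE -[in X in _`_X]size_rs.
  rewrite coefPn_prod_XsubC; last by rewrite size_rs -lt0n.
  by move/oppr_inj ->; rewrite /mxtrace raddf_sum; apply: eq_bigr => i _; rewrite mxE.
have rs_real z : z \in rs -> z \is Num.real.
  by move=> /eig_rs; apply: hermitian_eigenvalue_real.
have [z zrs z_gt0] : exists2 z, z \in rs & 0 < z.
  apply/hasP; apply: contraTT trS => /hasPn rs_le0.
  rewrite -leNgt -(@lecR R) rmorph0 -sum_rs big_seq sumr_le0 // => z zrs.
  by have := rs_le0 z zrs; rewrite real_leNgt ?real0 ?(rs_real z zrs).
have zE : (complex.Re z)%:C%C = z := RRe_real (rs_real z zrs).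
exists (complex.Re z); first by rewrite -ltcR zE.
rewrite eigenvalue_root_char -(fmorph_root (real_complex R)) map_char_poly -/SC.
by move: (eig_rs z zrs); rewrite -zE eigenvalue_root_char.
Qed.

Lemma char_poly_mulmxC (R : comNzRingType) p q
    (A : 'M[R]_(p, q)) (B : 'M[R]_(q, p)) :
  'X^q * char_poly (A *m B) = 'X^p * char_poly (B *m A).
Proof.
rewrite /char_poly /char_poly_mx !map_mxM.
set A' := map_mx polyC A; set B' := map_mx polyC B.
set M := block_mx ('X%:M : 'M_p) A' B' (1%:M : 'M_q).
have ML : M *m block_mx 1%:M 0 (- B') 1%:M = block_mx ('X%:M - A' *m B') A' 0 1%:M.
  by rewrite mulmx_block !mulmx0 !mulmx1 !mul1mx !add0r mulmxN subrr.
have MR : block_mx 1%:M 0 (- B') 'X%:M *m M = block_mx 'X%:M A' 0 ('X%:M - B' *m A').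
  rewrite mulmx_block !mul0mx !mul1mx !addr0 !mulNmx mul_mx_scalar mul_scalar_mx.
  by rewrite addNr mulmx1 addrC.
have detM : \det M = \det ('X%:M - A' *m B').
  by have := congr1 determinant ML; rewrite det_mulmx det_lblock det_ublock !det1 !mulr1.
have := congr1 determinant MR.
by rewrite det_mulmx det_lblock det_ublock det1 mul1r !det_scalar detM mulrC => ->.
Qed.

Lemma char_poly_add_mulmx0 (R : comNzRingType) k (P Q : 'M[R]_k) : P *m Q = 0 ->
  char_poly P * char_poly Q = 'X^k * char_poly (P + Q).
Proof.
move=> PQ0; rewrite /char_poly -det_mulmx -detZ; congr determinant.
rewrite /char_poly_mx mulmxBl !mulmxBr -map_mxM PQ0 map_mx0 subr0.
rewrite mul_mx_scalar mul_scalar_mx mul_mx_scalar map_mxD scalerBr scalerDr opprD addrA.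
by rewrite addrAC.
Qed.

Lemma char_poly_scalar_add (R : comNzRingType) k (c : R) (A : 'M[R]_k) :
  char_poly (c%:M + A) = char_poly A \Po ('X - c%:P).
Proof.
rewrite /char_poly -[RHS](det_map_mx (comp_poly ('X - c%:P))).
congr determinant; apply/matrixP => i j; rewrite !mxE.
rewrite /= raddfB /= raddfMn /= comp_polyC comp_polyX.
by case: (i == j); rewrite ?mulr1n ?mulr0n ?add0r ?sub0r ?polyCD ?opprD ?addrA.
Qed.

Lemma mup_comp_XsubC (F : fieldType) (p : {poly F}) (a c : F) : p != 0 ->
  mup a (p \Po ('X - c%:P)) = mup (a - c) p.
Proof.
move=> p0; have [k [r]] := multiplicity_XsubC p (a - c); rewrite p0 /= => r_ac ->.
rewrite mupMr // mup_XsubCX eqxx comp_polyM mupMr; last first.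
  by rewrite /root horner_comp !hornerE.
rewrite rmorphXn /= comp_polyB comp_polyX comp_polyC polyCB opprB addrA subrK.
by rewrite mup_XsubCX eqxx.
Qed.

Lemma mup_XnM (F : fieldType) (p : {poly F}) (a : F) k : a != 0 ->
  mup a ('X^k * p) = mup a p.
Proof. by move=> a0; rewrite mupMr // rootE hornerXn expf_neq0. Qed.

Lemma eigenvalue_mup (F : fieldType) k (A : 'M[F]_k) a :
  eigenvalue A a = (0 < mup a (char_poly A))%N.
Proof.
by rewrite eigenvalue_root_char -XsubC_dvd ?dvdp_XsubCl // monic_neq0 ?char_poly_monic.
Qed.

Lemma mup_char_poly_hodge (F : fieldType) n m t
    (B1 : 'M[F]_(n, m)) (B2 : 'M[F]_(m, t)) a :
  B1 *m B2 = 0 -> a != 0 ->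
  mup a (char_poly (B1^T *m B1 + B2 *m B2^T)) =
    (mup a (char_poly (B1 *m B1^T)) + mup a (char_poly (B2^T *m B2)))%N.
Proof.
move=> B1B2 a0; have cp0 k (M : 'M[F]_k) : char_poly M != 0.
  by rewrite monic_neq0 ?char_poly_monic.
have orth : (B1^T *m B1) *m (B2 *m B2^T) = 0.
  by rewrite mulmxA -(mulmxA _ B1) B1B2 mulmx0 mul0mx.
rewrite -(mup_XnM _ m a0) -char_poly_add_mulmx0 // mupM ?cp0 //.
rewrite -(mup_XnM (char_poly (B1^T *m B1)) n a0) char_poly_mulmxC mup_XnM //.
by rewrite -(mup_XnM (char_poly (B2 *m B2^T)) t a0) char_poly_mulmxC mup_XnM.
Qed.

Lemma is_max_eig_union (R : realFieldType) k1 k2 k3 (H : 'M[R]_k1) (L : 'M[R]_k2)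
    (A : 'M[R]_k3) (c mu eta : R) :
  (forall a, a != 0 -> eigenvalue H a = eigenvalue L a || eigenvalue A (a - c)) ->
  0 < mu -> is_max_eig L mu -> ((0 < k3)%N -> is_max_eig A eta) ->
  is_max_eig H (if (0 < k3)%N then Num.max mu (c + eta) else mu).
Proof.
move=> eigH mu_gt0 [Lmu Lmax] Amax.
set M := if _ then _ else _.
have mu_le_M : mu <= M by rewrite /M; case: ifP => _; rewrite ?le_max lexx.
have k3_gt0 y : eigenvalue A y -> (0 < k3)%N.
  case: k3 A {eigH Amax M mu_le_M} => // A /eigenvalueP [v _]; by rewrite (thinmx0 v) eqxx.
split.
  rewrite /M; case: (posnP k3) => [_|k3_pos]; first by rewrite eigH ?Lmu ?gt_eqF.
  have [Aeta _] := Amax k3_pos; rewrite maxEle; case: ifP => [mu_le|_].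
    rewrite eigH; first by rewrite addrAC subrr add0r Aeta orbT.
    by rewrite gt_eqF // (lt_le_trans mu_gt0).
  by rewrite eigH ?Lmu ?gt_eqF.
move=> y; have [->|y0] := eqVneq y 0; first by move=> _; exact: le_trans (ltW mu_gt0) mu_le_M.
rewrite eigH // => /orP [/Lmax y_le|Ay]; first exact: le_trans y_le mu_le_M.
have [_ /(_ _ Ay) le_eta] := Amax (k3_gt0 _ Ay).
by rewrite /M (k3_gt0 _ Ay) le_max -lerBlDl le_eta orbT.
Qed.

Ltac vertex_cases :=
  intros; rewrite ?xpair_eqE ?inE /=;
  repeat (match goal with
    | H : is_true (?u != ?u) |- _ => by rewrite eqxx in H
    | |- context [?u == ?u] => rewrite eqxx
    | H : is_true (?u != ?v) |- context [?u == ?v] => rewrite (negbTE H)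
    | H : is_true (?u != ?v) |- context [?v == ?u] => rewrite [v == u]eq_sym (negbTE H)
    | |- context [?u == ?v] => case: (eqVneq u v) => [?|?]; subst
    end; rewrite /=);
  try done; try by ring.

Section IncidenceMatrices.
Variables (n m t : nat) (tl hd : 'I_m -> 'I_n) (tri : 'I_t -> 'I_n * 'I_n * 'I_n).
Hypothesis simpleG : simple_oriented tl hd.
Hypothesis trianglesG : oriented_triangles tl hd tri.
Variable R : numDomainType.

Local Notation adjv := (adjv tl hd).
Local Notation in_tri := (in_tri tl hd tri).
Local Notation tri_pos := (tri_pos tl hd tri).

Definition joins (x y : 'I_n) (e : 'I_m) : bool :=
  ((tl e == x) && (hd e == y)) || ((tl e == y) && (hd e == x)).

Lemma tl_neq_hd e : tl e != hd e.
Proof. exact: simpleG.1. Qed.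

Lemma joins_uniq x y e e' : joins x y e -> joins x y e' -> e = e'.
Proof.
move=> /orP[] /andP[/eqP exy /eqP eyx] /orP[] /andP[/eqP e'xy /eqP e'yx]; apply: simpleG.2;
  by rewrite exy eyx e'xy e'yx // setUC.
Qed.

Lemma sum_joins x y : \sum_e ((joins x y e)%:R : R) = (adjv x y)%:R.
Proof.
have [/existsP [e0 e0xy] | /existsPn no_edge] := boolP (adjv x y); last first.
  by rewrite big1 // => e _; rewrite /joins (negbTE (no_edge e)).
rewrite (bigD1 e0) //= {1}/joins e0xy big1 ?addr0 // => e ne0.
by case: (boolP (joins x y e)) => // exy; case/eqP: ne0; apply: joins_uniq exy e0xy.
Qed.

Lemma sum_joins_l u e :
  \sum_w ((joins u w e)%:R : R) = (tl e == u)%:R + (hd e == u)%:R.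
Proof.
have sum_eq1 (x : 'I_n) : \sum_w ((x == w)%:R : R) = 1.
  rewrite (bigD1 x) //= eqxx big1 ?addr0 // => w /negbTE.
  by rewrite eq_sym => ->.
have jE w : (joins u w e)%:R =
    (tl e == u)%:R * (hd e == w)%:R + (hd e == u)%:R * (tl e == w)%:R :> R.
  by rewrite /joins; have := tl_neq_hd e; vertex_cases.
by rewrite (eq_bigr _ (fun w _ => jE w)) big_split /= -!mulr_sumr !sum_eq1 !mulr1.
Qed.

Definition vertex_edge_mx : 'M[R]_(n, m) :=
  \matrix_(v, e) ((v == hd e)%:R - (v == tl e)%:R).

Lemma laplacianE : laplacian tl hd R = vertex_edge_mx *m vertex_edge_mx^T.
Proof.
apply/matrixP => u v; rewrite !mxE.
under [RHS]eq_bigr => e _ do rewrite !mxE.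
have [<-|uv] := eqVneq u v.
  have adj_uu : adjv u u = false.
    by apply/existsPn => e; rewrite orbb; have := tl_neq_hd e; vertex_cases.
  rewrite adj_uu subr0 -sum1_card big_mkcond natr_sum /=.
  under eq_bigr => w _ do rewrite inE -sum_joins.
  rewrite exchange_big /=; apply: eq_bigr => e _; rewrite sum_joins_l.
  by have := tl_neq_hd e; vertex_cases.
rewrite sub0r (_ : (if adjv u v then 1 else 0) = (adjv u v)%:R); last by case: adjv.
rewrite -sum_joins -sumrN; apply: eq_bigr => e _.
by rewrite /joins; have := tl_neq_hd e; vertex_cases.
Qed.

Lemma vertex_edge_gramE e e' : (vertex_edge_mx^T *m vertex_edge_mx) e e' =
  (hd e == hd e')%:R + (tl e == tl e')%:R - (hd e == tl e')%:R - (tl e == hd e')%:R.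
Proof.
have sum_eqeq (x y : 'I_n) : \sum_v ((v == x)%:R * (v == y)%:R : R) = (x == y)%:R.
  rewrite (bigD1 x) //= eqxx mul1r big1 ?addr0 // => v /negbTE vx.
  by rewrite vx mul0r.
rewrite mxE -!sum_eqeq -big_split -!sumrB /=; apply: eq_bigr => v _; rewrite !mxE.
by ring.
Qed.

Lemma mxtrace_laplacian : \tr (laplacian tl hd R) = (2 * m)%:R.
Proof.
rewrite laplacianE mxtrace_mulC /mxtrace.
under eq_bigr => e _ do
  rewrite vertex_edge_gramE !eqxx [hd e == tl e]eq_sym (negbTE (tl_neq_hd e)).
by rewrite sumr_const card_ord subr0 subr0 natrM mulr_natr.
Qed.

Definition tri_sign (a b c x y : 'I_n) : R :=
  if (x \in [set a; b; c]) && (y \in [set a; b; c]) then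
    (if [|| (x, y) == (a, b), (x, y) == (b, c) | (x, y) == (c, a)] then 1 else -1)
  else 0.

Definition edge_tri_mx : 'M[R]_(m, t) :=
  \matrix_(e, i) (if in_tri i e then (if tri_pos i e then 1 else -1) else 0).

Lemma edge_tri_mxE e i a b c :
  tri i = (a, b, c) -> edge_tri_mx e i = tri_sign a b c (tl e) (hd e).
Proof. by move=> triE; rewrite mxE /in_tri /tri_pos /tri_vs triE. Qed.

Lemma triangle_vertices i : exists a b c, tri i = (a, b, c) /\
  [/\ a != b, b != c, a != c & [/\ adjv a b, adjv b c & adjv a c]].
Proof.
have := trianglesG.1 i; case: (tri i) => [[a b] c].
by case/and5P => ab bc ac adj_ab /andP [adj_bc adj_ac]; exists a, b, c.
Qed.

Lemma tri_sign_antisym a b c x y : a != b -> b != c -> a != c -> x != y ->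
  tri_sign a b c y x = - tri_sign a b c x y.
Proof. by rewrite /tri_sign; vertex_cases. Qed.

Lemma gram_entry_offdiag (x y x' y' : 'I_n) : x != y -> x' != y' ->
  (x, y) != (x', y') -> (x, y) != (y', x') ->
  (y == y')%:R + (x == x')%:R - (y == x')%:R - (x == y')%:R =
  if (y == x') || (y' == x) then -1 else if (y == y') || (x == x') then 1 else 0 :> R.
Proof. by vertex_cases. Qed.

Lemma gram_entry_cotri a b c x y x' y' : a != b -> b != c -> a != c -> x != y -> x' != y' ->
  (x, y) != (x', y') -> (x, y) != (y', x') ->
  x \in [set a; b; c] -> y \in [set a; b; c] ->
  x' \in [set a; b; c] -> y' \in [set a; b; c] ->
  (y == y')%:R + (x == x')%:R - (y == x')%:R - (x == y')%:R +
    tri_sign a b c x y * tri_sign a b c x' y' = 0.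
Proof.
move=> ab bc ac xy xy' ne ne_rev; rewrite /tri_sign !inE.
by do 4 (case/orP => [/orP [] | ] /eqP ?; subst); vertex_cases.
Qed.

Lemma sum_tri_sign (G : 'I_n -> 'I_n -> R) a b c :
  a != b -> b != c -> a != c -> adjv a b -> adjv b c -> adjv a c ->
  (forall x y, x != y -> G y x = - G x y) ->
  \sum_e G (tl e) (hd e) * tri_sign a b c (tl e) (hd e) = G a b + G b c + G c a.
Proof.
move=> ab bc ac adj_ab adj_bc adj_ac G_anti.
have Gba := G_anti _ _ ab; have Gcb := G_anti _ _ bc.
have Gac : G a c = - G c a by rewrite G_anti // eq_sym.
have termE e : G (tl e) (hd e) * tri_sign a b c (tl e) (hd e) =
    (joins a b e)%:R * G a b + (joins b c e)%:R * G b c + (joins a c e)%:R * G c a.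
  rewrite /joins /tri_sign; move: (tl e) (hd e) (tl_neq_hd e) => x y.
  by vertex_cases; rewrite ?Gba ?Gcb ?Gac; ring.
rewrite (eq_bigr _ (fun e _ => termE e)) !big_split /= -!mulr_suml !sum_joins.
by rewrite adj_ab adj_bc adj_ac !mul1r.
Qed.

Lemma vertex_edge_tri_mx0 : vertex_edge_mx *m edge_tri_mx = 0.
Proof.
apply/matrixP => v i; rewrite !mxE.
have [a [b [c [triE [ab bc ac [adj_ab adj_bc adj_ac]]]]]] := triangle_vertices i.
under eq_bigr => e _ do rewrite mxE (edge_tri_mxE _ triE).
rewrite (sum_tri_sign (G := fun x y => (v == y)%:R - (v == x)%:R)) //; first by ring.
by move=> x y _; ring.
Qed.

Lemma edge_ends_neq e e' : e != e' ->
  ((tl e, hd e) != (tl e', hd e')) && ((tl e, hd e) != (hd e', tl e')).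
Proof.
move=> ne; apply/andP; split; apply: contraNneq ne => -[tlE hdE]; apply/eqP/simpleG.2.
  by rewrite tlE hdE.
by rewrite tlE hdE setUC.
Qed.

Lemma card_ends_ge3 e e' : e != e' -> (3 <= #|[set tl e; hd e; tl e'; hd e']|)%N.
Proof.
move=> ne; have card_ends f : #|[set tl f; hd f]| = 2 by rewrite cards2 tl_neq_hd.
have [z z_e' z_e] : exists2 z, z \in [set tl e'; hd e'] & z \notin [set tl e; hd e].
  apply/subsetPn; apply: contraNN ne => sub; apply/eqP/simpleG.2/esym/eqP.
  by rewrite eqEcard sub !card_ends.
have card3 : #|[set tl e; hd e; z]| = 3%N by rewrite setUC cardsU1 cards2 z_e tl_neq_hd.
rewrite -card3; apply: subset_leq_card; apply/subsetP => w.
by move: z_e'; rewrite !inE => /orP [] /eqP -> /orP [/orP [] -> | ->]; rewrite ?orbT.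
Qed.

Lemma tri_vsE k e e' : e != e' -> in_tri k e -> in_tri k e' ->
  tri_vs tri k = [set tl e; hd e; tl e'; hd e'].
Proof.
move=> ne /andP [tl_e hd_e] /andP [tl_e' hd_e']; apply/eqP; rewrite eq_sym eqEcard.
apply/andP; split.
  by apply/subsetP => w; rewrite !inE => /orP [/orP [/orP []|]|] /eqP ->.
apply: leq_trans (card_ends_ge3 ne); rewrite /tri_vs; case: (tri k) => [[a b] c].
by rewrite setUC cardsU1 cards2; case: (_ \notin _); case: (_ != _).
Qed.

Lemma in_tri_uniq i j e e' : e != e' -> in_tri i e -> in_tri i e' ->
  in_tri j e -> in_tri j e' -> i = j.
Proof.
move=> ne ie ie' je je'; apply: trianglesG.2.1.
by rewrite (tri_vsE ne ie ie') (tri_vsE ne je je').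
Qed.

Lemma edge_tri_mx0 e i : ~~ in_tri i e -> edge_tri_mx e i = 0.
Proof. by rewrite mxE => /negbTE ->. Qed.

Lemma edge_tri_gramE : edge_tri_mx^T *m edge_tri_mx = 3%:M + tri_adj_mx tl hd tri R.
Proof.
apply/matrixP => i j; rewrite !mxE.
under eq_bigr => e _ do rewrite mxE.
have [<-|ij] := eqVneq i j.
  have [a [b [c [triE [ab bc ac [adj_ab adj_bc adj_ac]]]]]] := triangle_vertices i.
  under eq_bigr => e _ do rewrite (edge_tri_mxE _ triE).
  rewrite (sum_tri_sign (G := tri_sign a b c)) //; last first.
    by move=> x y; apply: tri_sign_antisym.
  by rewrite /= addr0 /tri_sign; vertex_cases.
rewrite mulr0n add0r /=.
have [common|no_common] := boolP [exists e, in_tri i e && in_tri j e]; last first.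
  rewrite big1 // => e _.
  have [ie|/edge_tri_mx0 ->] := boolP (in_tri i e); last by rewrite mul0r.
  have [je|/edge_tri_mx0 ->] := boolP (in_tri j e); last by rewrite mulr0.
  by case/existsP: no_common; exists e; rewrite ie je.
have [e0 /andP [ie0 je0]] := existsP common.
have common_e0 e : in_tri i e -> in_tri j e -> e = e0.
  move=> ie je; apply/eqP; apply: contraNT ij => ne0; apply/eqP.
  exact: in_tri_uniq ne0 ie ie0 je je0.
rewrite (bigD1 e0) //= big1 ?addr0 => [|e ne0]; last first.
  have [/andP [ie je] | ] := boolP (in_tri i e && in_tri j e).
    by move/eqP: ne0; rewrite (common_e0 _ ie je).
  by case/nandP => /edge_tri_mx0 ->; rewrite ?mul0r ?mulr0.
pose P e := tri_pos i e && tri_pos j e || tri_neg tl hd tri i e && tri_neg tl hd tri j e.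
have -> : [exists e, in_tri i e && in_tri j e && P e] = P e0.
  apply/existsP/idP => [[e /andP [/andP [ie je]]] | Pe0]; last by exists e0; rewrite ie0 je0.
  by rewrite (common_e0 _ ie je).
rewrite /P /tri_neg !mxE ie0 je0 /=.
by case: (tri_pos i e0); case: (tri_pos j e0); rewrite /= ?mulrNN ?mulr1 ?mulrN1 ?mulN1r.
Qed.

Lemma helmholtzianE : helmholtzian tl hd tri R =
  vertex_edge_mx^T *m vertex_edge_mx + edge_tri_mx *m edge_tri_mx^T.
Proof.
apply/matrixP => e e'; rewrite [RHS]mxE vertex_edge_gramE !mxE.
under [X in _ = _ + X]eq_bigr => i _ do rewrite !mxE.
have [<-|ne] := eqVneq e e'.
  rewrite !eqxx [hd e == tl e]eq_sym (negbTE (tl_neq_hd e)) /ntri -sum1_card.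
  rewrite natrD big_mkcond natr_sum addrC !subr0 /=; congr (_ + _); apply: eq_bigr => i _.
  by rewrite inE; case: in_tri; case: tri_pos; rewrite ?mulrNN ?mulr1 ?mulr0.
have /andP [ends_ne ends_ne_rev] := edge_ends_neq ne.
have [/existsP [i0 /andP [ie ie']] | no_common] := boolP (co_tri tl hd tri e e'); last first.
  rewrite !andbT big1 ?addr0 => [|i _].
    by rewrite (gram_entry_offdiag (tl_neq_hd e) (tl_neq_hd e') ends_ne ends_ne_rev).
  have [ie|_] := boolP (in_tri i e); last by rewrite mul0r.
  have [ie'|_] := boolP (in_tri i e'); last by rewrite mulr0.
  by case/existsP: no_common; exists i; rewrite ie ie'.
rewrite !andbF (bigD1 i0) //= big1 ?addr0 => [|i ni0]; last first.
  have [/andP [ie2 ie2'] | ] := boolP (in_tri i e && in_tri i e').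
    by move/eqP: ni0; rewrite (in_tri_uniq ne ie2 ie2' ie ie').
  by case/nandP => /negbTE ->; rewrite ?mul0r ?mulr0.
have [a [b [c [triE [ab bc ac _]]]]] := triangle_vertices i0.
move: (edge_tri_mxE e triE) (edge_tri_mxE e' triE); rewrite !mxE => -> ->.
move: ie ie'; rewrite /in_tri /tri_vs triE => /andP [tl_e hd_e] /andP [tl_e' hd_e'].
by rewrite (gram_entry_cotri ab bc ac (tl_neq_hd e) (tl_neq_hd e') ends_ne ends_ne_rev
  tl_e hd_e tl_e' hd_e').
Qed.

End IncidenceMatrices.

Theorem theorem5p1 (R : rcfType) (n m t : nat) (tl hd : 'I_m -> 'I_n)
    (tri : 'I_t -> 'I_n * 'I_n * 'I_n) :
  simple_oriented tl hd ->
  oriented_triangles tl hd tri ->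
  (0 < m)%N ->
  (forall a : R, a != 0 ->
     mup a (char_poly (helmholtzian tl hd tri R)) =
       (mup a (char_poly (laplacian tl hd R)) +
        mup (a - 3) (char_poly (tri_adj_mx tl hd tri R)))%N) /\
  (forall mu1 eta1 : R,
     is_max_eig (laplacian tl hd R) mu1 ->
     ((0 < t)%N -> is_max_eig (tri_adj_mx tl hd tri R) eta1) ->
     is_max_eig (helmholtzian tl hd tri R)
       (if (0 < t)%N then Num.max mu1 (3 + eta1) else mu1)).
Proof.
move=> simpleG trianglesG m_gt0.
set H := helmholtzian _ _ _ _; set L := laplacian _ _ _; set A := tri_adj_mx _ _ _ _.
have mupH a : a != 0 ->
    mup a (char_poly H) = (mup a (char_poly L) + mup (a - 3) (char_poly A))%N.
  move=> a0; rewrite /H helmholtzianE // mup_char_poly_hodge ?vertex_edge_tri_mx0 //.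
  rewrite -laplacianE // edge_tri_gramE // char_poly_scalar_add.
  by rewrite mup_comp_XsubC ?monic_neq0 ?char_poly_monic.
split=> // mu1 eta1 Lmax Amax.
have [r r_gt0 Lr] : exists2 r : R, 0 < r & eigenvalue L r.
  apply: symmetric_eigenvalue_gt0; first by rewrite /L laplacianE // trmx_mul trmxK.
  by rewrite /L mxtrace_laplacian // ltr0n muln_gt0 m_gt0.
apply: is_max_eig_union (lt_le_trans r_gt0 (Lmax.2 _ Lr)) Lmax Amax => a a0.
by rewrite !eigenvalue_mup mupH // addn_gt0.
Qed.
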